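(* Let $\mathcal{G}$ be a multi-layer graph with $l$ layers, $d,k\in\mathbb{N}$ with $k\ge1$, and $\mathcal{R}$ a collection of exactly $k$ subsets of $V(\mathcal{G})$. Let $L\subseteq\{1,\dots,l\}$ and $j\in\{1,\dots,l\}$ with $j>\max(L)$. If $|C^d_L(\mathcal{G})\cap C^d(G_j)|<\frac1k|\mathsf{Cov}(\mathcal{R})|+|\Delta(\mathcal{R},C^*(\mathcal{R}))|$, then $|\mathsf{Cov}((\mathcal{R}-\{C^*(\mathcal{R})\})\cup\{C^d_{L\cup\{j\}}(\mathcal{G})\})|<(1+\frac1k)|\mathsf{Cov}(\mathcal{R})|$.
   Context: A multi-layer graph $\mathcal{G}=(V,E_1,\dots,E_l)$ consists of a finite vertex set $V$ and edge sets $E_i$ of simple undirected graphs $G_i=(V,E_i)$. A graph is $d$-dense if every vertex has degree at least $d$; the $d$-coherent core $C^d_L(\mathcal{G})$ is the unique maximal $S\subseteq V$ such that the induced subgraph $G_i[S]$ is $d$-dense for all $i\in L$ (with $C^d_\emptyset(\mathcal{G})=V$). $C^d(G_j)$ is the $d$-core of $G_j$, i.e., the maximal $S$ with $G_j[S]$ $d$-dense (equal to $C^d_{\{j\}}(\mathcal{G})$). $\max(\emptyset)=-\infty$. For a collection $\mathcal{R}$ of sets, $\mathsf{Cov}(\mathcal{R})=\bigcup_{R\in\mathcal{R}}R$; for $C'\in\mathcal{R}$, $\Delta(\mathcal{R},C')=C'-\mathsf{Cov}(\mathcal{R}-\{C'\})$; $C^*(\mathcal{R})$ is a fixed element of $\mathcal{R}$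 minimizing $|\Delta(\mathcal{R},C')|$. *)

From mathcomp Require Import all_boot all_order all_algebra.
Set Implicit Arguments. Unset Strict Implicit. Unset Printing Implicit Defensive.

Definition simple_graph (T : finType) (e : rel T) : Prop :=
  symmetric e /\ irreflexive e.

Definition d_dense (T : finType) (d : nat) (e : rel T) (S : {set T}) : bool :=
  [forall x in S, d <= #|[set y in S | e x y]|].

(* d-coherent core C^d_L of the multi-layer graph G (layers indexed by 'I_l):
   the maximal S such that G_i[S] is d-dense for all i in L.  Since d-density
   is preserved under unions, the maximal such set is the union of all of them. *)
Definition coherent_core (T : finType) (l : nat) (G : 'I_l -> rel T)
  (d : nat) (L : {set 'I_l}) : {set T} :=
  \bigcup_(S : {set T} | [forall i in L, d_dense d (G i) S]) S.

Definition d_core (T : finType) (l : nat) (G : 'I_l -> rel T) (d : nat)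
  (j : 'I_l) : {set T} := coherent_core G d [set j].

Definition Cov (T : finType) (R : {set {set T}}) : {set T} :=
  \bigcup_(C in R) C.

Definition Delta (T : finType) (R : {set {set T}}) (C : {set T}) : {set T} :=
  C :\: Cov (R :\ C).

(* Replacing C^* by the new core X removes at most |Delta(R, C^* )|
   vertices from the cover and adds at most |X| <= |C^d_L ∩ C^d(G_j)|
   vertices, the inclusion holding because coherent cores shrink as the set
   of layers grows. *)
From mathcomp Require Import all_boot all_order all_algebra.
From mathcomp Require Import lra zify.
Import Order.TTheory GRing.Theory Num.Theory.

Set Implicit Arguments.
Unset Strict Implicit.

Lemma coherent_core_subset (T : finType) (l : nat) (G : 'I_l -> rel T)
    (d : nat) (L1 L2 : {set 'I_l}) :
  L1 \subset L2 -> coherent_core G d L2 \subset coherent_core G d L1.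
Proof.
move=> /subsetP sL12; apply/subsetP => x /bigcupP [S /forallP denseS Sx].
apply/bigcupP; exists S => //; apply/forall_inP => i iL1.
exact: (implyP (denseS i) (sL12 i iL1)).
Qed.

Lemma coherent_core_setU1_subset (T : finType) (l : nat) (G : 'I_l -> rel T)
    (d : nat) (L : {set 'I_l}) (j : 'I_l) :
  coherent_core G d (j |: L) \subset coherent_core G d L :&: d_core G d j.
Proof.
by rewrite subsetI !coherent_core_subset // ?subsetUr // sub1set setU11.
Qed.

Section Covers.

Variables (T : finType) (R : {set {set T}}) (C : {set T}).
Hypothesis CR : C \in R.

Lemma Cov_setD1 : Cov R = C :|: Cov (R :\ C).
Proof. by rewrite /Cov (big_setD1 _ CR). Qed.

Lemma card_Cov_Delta : (#|Cov (R :\ C)| + #|Delta R C| = #|Cov R|)%N.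
Proof.
rewrite Cov_setD1 /Delta cardsU cardsD.
have := subset_leq_card (subsetIl C (Cov (R :\ C))).
have := subset_leq_card (subsetIr C (Cov (R :\ C))).
lia.
Qed.

Lemma card_Cov_replace (X : {set T}) :
  (#|Cov ((R :\ C) :|: [set X])| + #|Delta R C| <= #|Cov R| + #|X|)%N.
Proof.
rewrite /Cov bigcup_setU big_set1 -/(Cov (R :\ C)) -card_Cov_Delta.
by rewrite -addnA (addnC #|Delta R C|) addnA leq_add2r leq_card_setU.
Qed.

End Covers.

Local Open Scope ring_scope.

Theorem lemma3 (T : finType) (l : nat) (G : 'I_l -> rel T)
  (HG : forall i, simple_graph (G i))
  (d k : nat) (hk : (1 <= k)%N)
  (R : {set {set T}}) (hR : #|R| = k)
  (Cstar : {set T}) (hCin : Cstar \in R)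
  (hCmin : forall C', C' \in R -> (#|Delta R Cstar| <= #|Delta R C'|)%N)
  (L : {set 'I_l}) (j : 'I_l) (hj : forall i, i \in L -> (i < j)%N)
  (H : (#|coherent_core G d L :&: d_core G d j|%:R : rat)
         < (#|Cov R|%:R / k%:R) + #|Delta R Cstar|%:R) :
  (#|Cov ((R :\ Cstar) :|: [set coherent_core G d (j |: L)])|%:R : rat)
    < (1 + 1 / k%:R) * #|Cov R|%:R.
Proof.
have core_le := subset_leq_card (coherent_core_setU1_subset G d L j).
have cover_le := card_Cov_replace hCin (coherent_core G d (j |: L)).
rewrite -(ler_nat rat) in core_le.
rewrite -(ler_nat rat) !natrD in cover_le.
have -> : (1 + 1 / k%:R) * (#|Cov R|%:R : rat) = #|Cov R|%:R + #|Cov R|%:R / k%:R.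
  by rewrite mulrDl mul1r mul1r mulrC.
lra.
Qed.
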